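(* Let $e\in K\setminus\{0\}$ and $f=\|\cdot\|e:X\to Y$. Then $D_{X^*}e\subset\widehat\partial f(0)$, where $D_{X^*}e=\{x^*(\cdot)e: x^*\in D_{X^*}\}$, and for every $y^*\in K_e^+$, $$y^*(\widehat\partial f(0))\subset y^*(e)D_{X^*}.$$
   Context: $X,Y$ are real normed spaces with duals $X^*,Y^*$; $D_{X^*}$ is the closed unit ball of $X^*$; $B(X,Y)$ is the space of bounded linear operators $X\to Y$; $B(x,\delta)$ is the open ball and $D_Y$ the closed unit ball of $Y$. $K\subset Y$ is a pointed closed convex cone, $K^+=\{y^*\in Y^*: y^*(k)\ge0\ \forall k\in K\}$, and $K_e^+=\{y^*\in K^+: y^*(e)\neq0\}$. For $f:X\to Y$, $\widehat\partial f(\bar x)$ is the set of all $T\in B(X,Y)$ such that for every $\varepsilon>0$ there is $\delta>0$ with $f(x)+K\subset f(\bar x)+K+T(x-\bar x)+\varepsilon\|x-\bar x\|D_Y$ for all $x\in B(\bar x,\delta)$. For $\mathcal T\subset B(X,Y)$, $y^*(\mathcal T)=\{y^*\circ T:T\in\mathcal T\}\subset X^*$. *)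

From HB Require Import structures.
From mathcomp Require Import all_boot all_order all_algebra.
From mathcomp Require Import all_classical all_reals all_analysis.
Set Implicit Arguments. Unset Strict Implicit. Unset Printing Implicit Defensive.
Import Order.TTheory GRing.Theory Num.Theory.
Import numFieldNormedType.Exports.
Local Open Scope classical_set_scope.
Local Open Scope ring_scope.

Definition bounded_linear {R : realType} {U V : normedModType R} (T : U -> V) : Prop :=
  (forall (a : R) (x y : U), T (a *: x + y) = a *: T x + T y) /\
  (exists M : R, forall x : U, `|T x| <= M * `|x|).

Definition dual {R : realType} {U : normedModType R} (xs : U -> R) : Prop :=
  @bounded_linear R U R^o xs.

Definition dual_ball {R : realType} {U : normedModType R} (xs : U -> R) : Prop :=
  dual xs /\ forall x : U, `|xs x| <= `|x|.

Definition pointed_closed_convex_cone {R : realType} {V : normedModType R}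
  (K : set V) : Prop :=
  closed K /\ K 0 /\
  (forall k1 k2, K k1 -> K k2 -> K (k1 + k2)) /\
  (forall (t : R) k, 0 <= t -> K k -> K (t *: k)) /\
  (forall k, K k -> K (- k) -> k = 0).

Definition dual_cone {R : realType} {V : normedModType R} (K : set V) (ys : V -> R) : Prop :=
  dual ys /\ forall k, K k -> 0 <= ys k.

Definition dual_cone_e {R : realType} {V : normedModType R} (K : set V) (e : V)
  (ys : V -> R) : Prop :=
  dual_cone K ys /\ ys e <> 0.

(* Frechet-type subdifferential \hat\partial f(xbar) w.r.t. the cone K:
   T in B(X,Y) such that for every eps > 0 there is delta > 0 with
   f(x) + K \subset f(xbar) + K + T(x - xbar) + eps ||x - xbar|| D_Y
   for all x in the open ball B(xbar, delta). *)
Definition frechet_subdiff {R : realType} {U V : normedModType R}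
  (K : set V) (f : U -> V) (xbar : U) (T : U -> V) : Prop :=
  bounded_linear T /\
  forall eps : R, 0 < eps -> exists2 delta : R, 0 < delta &
    forall x : U, `|x - xbar| < delta ->
      forall k : V, K k ->
        exists k' : V, exists d : V,
          [/\ K k', `|d| <= 1 &
              f x + k = f xbar + k' + T (x - xbar) + (eps * `|x - xbar|) *: d].

From HB Require Import structures.
From mathcomp Require Import all_boot all_order all_algebra.
From mathcomp Require Import all_classical all_reals all_analysis.
From mathcomp Require Import ring lra.
Set Implicit Arguments. Unset Strict Implicit. Unset Printing Implicit Defensive.
Import Order.TTheory GRing.Theory Num.Theory.
Import numFieldNormedType.Exports.
Local Open Scope classical_set_scope.
Local Open Scope ring_scope.

(* The inclusion D_{X^*} e ⊂ ∂f(0) is exact: f x + k = f 0 + k' + x^*(x) e with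
   k' = (‖x‖ - x^*(x)) e + k ∈ K, since x^*(x) ≤ ‖x‖.  Conversely, for y^* ∈ K_e^+
   and T ∈ ∂f(0), applying y^* to the defining inclusion with k = 0 gives
   y^*(T z) ≤ (y^*(e) + ε)‖z‖ near 0; positive homogeneity extends this to all z,
   letting ε → 0 and replacing z by -z gives |y^*(T z)| ≤ y^*(e)‖z‖, so
   y^* ∘ T / y^*(e) lies in D_{X^*}. *)

Section BoundedLinear.
Variables (R : realType) (U V : normedModType R) (T : U -> V).
Hypothesis T_bl : bounded_linear T.

Lemma bounded_linear0 : T 0 = 0.
Proof.
have := T_bl.1 1 0 0; rewrite !scale1r addr0 => E.
by apply: (addrI (T 0)); rewrite addr0 -E.
Qed.

Lemma bounded_linearZ a x : T (a *: x) = a *: T x.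
Proof. by have := T_bl.1 a x 0; rewrite !addr0 bounded_linear0 addr0. Qed.

Lemma bounded_linearD x y : T (x + y) = T x + T y.
Proof. by have := T_bl.1 1 x y; rewrite !scale1r. Qed.

Lemma bounded_linearN x : T (- x) = - T x.
Proof. by rewrite -scaleN1r bounded_linearZ scaleN1r. Qed.

Lemma bounded_linear_bound : exists2 M : R, 0 <= M & forall x, `|T x| <= M * `|x|.
Proof.
have [M HM] := T_bl.2; exists `|M| => // x.
by apply: le_trans (HM x) _; rewrite ler_wpM2r // ler_norm.
Qed.

End BoundedLinear.

Lemma bounded_linear_comp (R : realType) (U V W : normedModType R)
    (T : U -> V) (S : V -> W) :
  bounded_linear T -> bounded_linear S -> bounded_linear (S \o T).
Proof.
move=> T_bl S_bl; split=> [a x y | ] /=.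
  by rewrite T_bl.1 S_bl.1.
have [MT MT0 HT] := bounded_linear_bound T_bl.
have [MS MS0 HS] := bounded_linear_bound S_bl.
exists (MS * MT) => x; apply: le_trans (HS (T x)) _.
by rewrite -mulrA ler_wpM2l.
Qed.

Lemma dual_ball_scale (R : realType) (X : normedModType R) (phi : X -> R) (c : R) :
  dual phi -> 0 < c -> (forall x, `|phi x| <= c * `|x|) ->
  dual_ball (fun x => phi x / c).
Proof.
move=> phi_dual c_gt0 phi_le.
have norm_le x : `|phi x / c| <= `|x|.
  by rewrite normrM normfV (gtr0_norm c_gt0) ler_pdivrMr // mulrC.
split=> //; split; last by exists 1 => x; rewrite mul1r.
move=> a x y; rewrite phi_dual.1.
by change ((a * phi x + phi y) / c = a * (phi x / c) + phi y / c); rewrite mulrDl mulrA.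
Qed.

Lemma dual_le_of_small (R : realType) (X : normedModType R) (phi : X -> R)
    (b delta : R) :
  dual phi -> 0 < delta -> (forall z, `|z| < delta -> phi z <= b * `|z|) ->
  forall z, phi z <= b * `|z|.
Proof.
move=> phi_dual delta_gt0 small z.
have [->|z_neq0] := eqVneq z 0; first by rewrite bounded_linear0 // normr0 mulr0.
have z_gt0 : 0 < `|z| by rewrite normr_gt0.
pose t := delta / (2 * `|z|).
have t_gt0 : 0 < t by rewrite divr_gt0 // mulr_gt0.
have tz : t * `|z| = delta / 2 by rewrite /t; field; rewrite gt_eqF.
have := small (t *: z); rewrite normrZ gtr0_norm // bounded_linearZ //=.
move=> /(_ ltac:(rewrite tz; lra)).
by rewrite mulrCA ler_pM2l.
Qed.

Lemma dual_norm_le_of_local (R : realType) (X : normedModType R) (phi : X -> R)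
    (c : R) :
  dual phi ->
  (forall eps, 0 < eps ->
     exists2 delta, 0 < delta & forall z, `|z| < delta -> phi z <= (c + eps) * `|z|) ->
  forall z, `|phi z| <= c * `|z|.
Proof.
move=> phi_dual local.
have upper z : phi z <= c * `|z|.
  apply/ler_addgt0Pr => eps eps_gt0.
  pose eps' := eps / (`|z| + 1).
  have eps'_gt0 : 0 < eps' by rewrite divr_gt0 // ltr_wpDl.
  have [delta delta_gt0 small] := local eps' eps'_gt0.
  apply: (le_trans (dual_le_of_small phi_dual delta_gt0 small z)).
  have : eps' * `|z| <= eps.
    rewrite /eps' mulrAC ler_pdivrMr ?ltr_wpDl //.
    by apply: ler_wpM2l; [exact: ltW | rewrite lerDl].
  by rewrite mulrDl; lra.
move=> z; rewrite ler_norml upper andbT lerNl.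
by rewrite -bounded_linearN // -(normrN z) upper.
Qed.

Lemma dual_ball_subdiff_norm_scale (R : realType) (X Y : normedModType R)
    (K : set Y) (e : Y) (xs : X -> R) :
  (forall k1 k2, K k1 -> K k2 -> K (k1 + k2)) ->
  (forall (t : R) k, 0 <= t -> K k -> K (t *: k)) ->
  K e -> dual_ball xs ->
  frechet_subdiff K (fun x => `|x| *: e) 0 (fun x => xs x *: e).
Proof.
move=> KD KZ Ke [xs_dual xs_le]; split.
  split=> [a x y | ]; first by rewrite xs_dual.1 scalerDl scalerA.
  by exists `|e| => x; rewrite normrZ mulrC ler_wpM2l.
move=> eps eps_gt0; exists 1 => // x _ k Kk.
exists ((`|x| - xs x) *: e + k), 0; split; rewrite ?normr0 //.
  by apply: KD => //; apply: KZ => //; rewrite subr_ge0 (le_trans (ler_norm _)).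
rewrite !subr0 scale0r scaler0 !addr0 add0r scalerBl.
by rewrite addrAC subrK.
Qed.

Lemma dual_cone_subdiff_norm_scale_local (R : realType) (X Y : normedModType R)
    (K : set Y) (e : Y) (ys : Y -> R) (T : X -> Y) :
  K 0 -> dual_cone K ys -> frechet_subdiff K (fun x => `|x| *: e) 0 T ->
  forall eps, 0 < eps ->
    exists2 delta, 0 < delta &
      forall z, `|z| < delta -> ys (T z) <= (ys e + eps) * `|z|.
Proof.
move=> K0 [ys_dual ys_ge0] [_ T_sub] eps eps_gt0.
have [M M_ge0 ys_le] := bounded_linear_bound ys_dual.
pose eps' := eps / (M + 1).
have eps'_gt0 : 0 < eps' by rewrite divr_gt0 // ltr_wpDl.
have eps'M : eps' * M <= eps.
  rewrite /eps' mulrAC ler_pdivrMr ?ltr_wpDl //.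
  by apply: ler_wpM2l; [exact: ltW | rewrite lerDl].
have [delta delta_gt0 near0] := T_sub eps' eps'_gt0.
exists delta => // z z_small.
have [k' [d [Kk' d_le eq]]] := near0 z ltac:(by rewrite subr0) 0 K0.
move: eq; rewrite !subr0 normr0 scale0r add0r addr0 => /(congr1 ys).
rewrite !(bounded_linearD ys_dual) !(bounded_linearZ ys_dual) /= => eq.
have {}eq : `|z| * ys e = ys k' + ys (T z) + eps' * `|z| * ys d := eq.
have ys_k' := ys_ge0 _ Kk'.
have ys_d : - M <= ys d.
  have : `|ys d| <= M by apply: le_trans (ys_le d) _; rewrite ler_piMr.
  by rewrite ler_norml => /andP[].
have err : - (eps * `|z|) <= eps' * `|z| * ys d.
  apply: le_trans (_ : eps' * `|z| * (- M) <= _); last first.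
    by apply: ler_wpM2l ys_d; rewrite mulr_ge0 // ltW.
  by rewrite mulrN lerN2 mulrAC (ler_wpM2r _ eps'M).
rewrite mulrDl [ys e * _]mulrC; lra.
Qed.

Theorem mainTheorem12 (R : realType) (X Y : normedModType R) (K : set Y) (e : Y) :
  pointed_closed_convex_cone K -> K e -> e <> 0 ->
  (forall xs : X -> R, dual_ball xs ->
     frechet_subdiff K (fun x : X => `|x| *: e) 0 (fun x : X => xs x *: e)) /\
  (forall ys : Y -> R, dual_cone_e K e ys ->
     forall T : X -> Y, frechet_subdiff K (fun x : X => `|x| *: e) 0 T ->
       exists2 xs : X -> R, dual_ball xs & forall x : X, ys (T x) = ys e * xs x).
Proof.
move=> [_ [K0 [KD [KZ _]]]] Ke _; split.
  by move=> xs; apply: dual_ball_subdiff_norm_scale.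
move=> ys [ys_cone ys_e_neq0] T T_sub.
have ys_e_gt0 : 0 < ys e by rewrite lt_def ys_cone.2 // andbT; exact/eqP.
have ysT_dual : dual (ys \o T) := bounded_linear_comp T_sub.1 ys_cone.1.
have ysT_le := dual_norm_le_of_local ysT_dual
  (dual_cone_subdiff_norm_scale_local K0 ys_cone T_sub).
exists (fun x => ys (T x) / ys e); first exact: dual_ball_scale.
by move=> x; rewrite mulrC divfK // gt_eqF.
Qed.
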